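(* Let $G$ be a graph and suppose we have a valid edge partition of $G$. Then the number of cycles compatible with this edge partition equals the number of edges of $G$ which lie in the spanning-tree part of the edge partition and whose two ends lie in the same tree of the 2-forest.
   Context: A spanning 2-forest is a spanning forest with exactly two trees (a tree may be a single vertex). A valid edge partition of a graph is a bipartition of its edge set such that one part is the edge set of a spanning tree and the other part is the edge set of a spanning 2-forest. A valid edge partition induces a bipartition of the vertex set according to which tree of the 2-forest each vertex lies in. A cycle $C$ is compatible with the valid edge partition if all vertices of $C$ lie in the same part of this vertex bipartition and exactly one edge of $C$ lies in the spanning-tree part of the edge partition. *)

(* Finite multigraphs (parallel edges allowed) given by a
   finite vertex type V, a finite edge type E and endpoint maps src tgt. *)
From mathcomp Require Import all_boot.
Set Implicit Arguments. Unset Strict Implicit. Unset Printing Implicit Defensive.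

Section Graph.
Variables (V E : finType) (src tgt : E -> V).

Definition adj (S : {set E}) : rel V :=
  fun x y => [exists e in S, ((src e == x) && (tgt e == y))
                          || ((src e == y) && (tgt e == x))].

(* degree of x in the subgraph (V, S) (a loop counts twice) *)
Definition deg (S : {set E}) (x : V) : nat :=
  #|[set e in S | src e == x]| + #|[set e in S | tgt e == x]|.

Definition is_cycle (C : {set E}) : bool :=
  [&& C != set0,
      [forall x, (deg C x == 0) || (deg C x == 2)] &
      [forall e1 in C, forall e2 in C, connect (adj C) (src e1) (src e2)]].

Definition acyclic (S : {set E}) : bool :=
  [forall C : {set E}, (C \subset S) ==> ~~ is_cycle C].

Definition ncomp (S : {set E}) : nat :=
  #|[set [set y | connect (adj S) x y] | x : V]|.

Definition spanning_tree (T : {set E}) : bool :=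
  acyclic T && [forall x, forall y, connect (adj T) x y].

Definition spanning_2forest (F : {set E}) : bool :=
  acyclic F && (ncomp F == 2).

Definition valid_partition (T F : {set E}) : bool :=
  [&& T :&: F == set0, T :|: F == setT, spanning_tree T & spanning_2forest F].

Definition same_part (F : {set E}) (x y : V) : bool := connect (adj F) x y.

Definition compatible (T F C : {set E}) : bool :=
  [&& is_cycle C,
      [forall e1 in C, forall e2 in C,
         [&& same_part F (src e1) (src e2), same_part F (src e1) (tgt e2)
           & same_part F (tgt e1) (tgt e2)]]
    & #|C :&: T| == 1].

End Graph.

From Pilot Require Import Defs.
From mathcomp Require Import all_boot.
Set Implicit Arguments.
Unset Strict Implicit.
Unset Printing Implicit Defensive.

(* A compatible cycle C meets T in a single edge e, and C :\ e is a path in F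
   joining the ends of e; conversely, a path in F joining the ends of such an
   edge e closes up with e into a compatible cycle.  Two compatible cycles
   through the same edge e coincide: an edge g of one that is missing from the
   other would have its ends joined in F :\ g (reroute e along the other
   cycle), and closing up with g gives a cycle inside the forest F.  Hence
   C |-> C :&: T maps the compatible cycles bijectively onto the singletons of
   the edges of T whose ends lie in one tree of F.  Only the acyclicity of F
   and T :|: F = setT, T :&: F = set0 are used. *)

Section Graph.
Variables (V E : finType) (src tgt : E -> V).
Implicit Types (S C P : {set E}) (x y v : V).
Local Notation adj := (adj src tgt).
Local Notation deg := (deg src tgt).
Local Notation is_cycle := (is_cycle src tgt).
Local Notation acyclic := (acyclic src tgt).

Lemma adjP S x y :
  reflect (exists2 e, e \in S & ((src e == x) && (tgt e == y))
                                || ((src e == y) && (tgt e == x)))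
          (adj S x y).
Proof.
apply: (iffP existsP) => [[e /andP[eS H]]|[e eS H]]; exists e => //.
by rewrite eS.
Qed.

Lemma adj_sym S : symmetric (adj S).
Proof.
by move=> x y; apply/adjP/adjP => -[e eS H]; exists e; rewrite // orbC.
Qed.

Lemma connect_adj_sym S : connect_sym (adj S).
Proof. exact/sym_connect_sym/adj_sym. Qed.

Lemma adj_edge S e : e \in S -> adj S (src e) (tgt e).
Proof. by move=> eS; apply/adjP; exists e; rewrite ?eqxx. Qed.

Lemma connect_adj_edges S S' :
  {in S, forall e, connect (adj S') (src e) (tgt e)} ->
  subrel (connect (adj S)) (connect (adj S')).
Proof.
move=> conS'; apply: connect_sub => x y.
case/adjP=> e /conS' + /orP[] /andP[/eqP<- /eqP<-] //.
by rewrite connect_adj_sym.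
Qed.

Lemma connect_adj_sub S S' : S \subset S' ->
  subrel (connect (adj S)) (connect (adj S')).
Proof.
move=> /subsetP subS'; apply: connect_adj_edges => e.
by move=> /subS' /adj_edge /connect1.
Qed.

Lemma degE S v : deg S v = \sum_(e in S) ((src e == v) + (tgt e == v)).
Proof.
rewrite /Defs.deg big_split /= -!sum1_card.
by congr (_ + _); rewrite big_mkcond [RHS]big_mkcond; apply: eq_bigr => e _;
  rewrite inE; case: (e \in S); case: eqP.
Qed.

Lemma deg_set1 e v : deg [set e] v = (src e == v) + (tgt e == v).
Proof. by rewrite degE big_set1. Qed.

Lemma degU1 e S v : e \notin S -> deg (e |: S) v = deg [set e] v + deg S v.
Proof. by move=> eS; rewrite !degE big_setU1 // big_set1. Qed.

Lemma deg_edge e x y v :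
  ((src e == x) && (tgt e == y)) || ((src e == y) && (tgt e == x)) ->
  (src e == v) + (tgt e == v) = (v == x) + (v == y).
Proof.
by case/orP=> /andP[/eqP-> /eqP->]; rewrite (eq_sym x) (eq_sym y) // addnC.
Qed.

Lemma even_sum (I : finType) (P : pred I) (F : I -> nat) :
  (forall i, P i -> ~~ odd (F i)) -> ~~ odd (\sum_(i | P i) F i).
Proof.
move=> evenF; apply: (big_ind (fun n => ~~ odd n)) => //.
by move=> m n /negbTE em /negbTE en; rewrite oddD em en.
Qed.

Lemma sum_eq_mem (A : {set V}) u : \sum_(x in A) (u == x) = (u \in A).
Proof.
have [uA|uNA] := boolP (u \in A); last first.
  rewrite big1 // => x xA; apply/eqP; rewrite eqb0.
  by apply: contraNneq uNA => ->.
rewrite (bigD1 u) //= eqxx big1 // => x /andP[_ xu].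
by apply/eqP; rewrite eqb0 eq_sym.
Qed.

Lemma deg_sum_closed_even S (A : {set V}) :
  {in S, forall e, (src e \in A) = (tgt e \in A)} ->
  ~~ odd (\sum_(x in A) deg S x).
Proof.
move=> closedA; under eq_bigr do rewrite degE.
rewrite exchange_big /=.
under eq_bigr => e eS do rewrite big_split /= !sum_eq_mem closedA //.
by rewrite big_split /= addnn odd_double.
Qed.

Lemma connect_cycleD1 C g : is_cycle C -> g \in C ->
  connect (adj (C :\ g)) (src g) (tgt g).
Proof.
(* Otherwise src g has degree 1 in C :\ g and every other vertex of its
   component degree 0 or 2, so the degree sum over that component is odd. *)
move=> /and3P[_ /forallP deg02 _] gC; apply: contraT => ncon.
set S := C :\ g; set A := [set v | connect (adj S) (src g) v].
have sgA : src g \in A by rewrite inE connect0.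
have degC x : x \in A -> deg C x = (src g == x) + deg S x.
  move=> xA; rewrite -(setD1K gC) degU1 ?setD11 // deg_set1.
  suff /negbTE-> : tgt g != x by rewrite addn0.
  by apply: contraNneq ncon => ->; rewrite inE in xA.
have closedA : {in S, forall e, (src e \in A) = (tgt e \in A)}.
  move=> e eS; rewrite !inE; apply/idP/idP => /connect_trans; apply.
    exact/connect1/adj_edge.
  by rewrite connect_adj_sym; apply/connect1/adj_edge.
have := deg_sum_closed_even closedA; rewrite (bigD1 (src g)) //= oddD.
have -> : deg S (src g) = 1.
  by move: (deg02 (src g)); rewrite degC // eqxx; case: (deg S _) => [|[|[]]].
rewrite (negbTE (even_sum _)) // => x /andP[xA xg].
move: (deg02 x); rewrite degC // (eq_sym _ x) (negbTE xg) add0n.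
by case/orP=> /eqP->.
Qed.

Lemma upath_edges S x p : uniq (x :: p) -> path (adj S) x p -> p != [::] ->
  exists P, [/\ P \subset S,
    {in P, forall h, (src h \in x :: p) && (tgt h \in x :: p)},
    {in x :: p, forall v, connect (adj P) x v} &
    forall v, deg P v = (v == x) + (v == last x p)
                        + 2 * ((v \in p) && (v != last x p))].
Proof.
elim: p x => [//|y q IH] x /= /andP[xNyq uyq] /andP[axy pq] _.
have /adjP[e eS Hxy] := axy.
have ends_e (s : seq V) : x \in s -> y \in s -> (src e \in s) && (tgt e \in s).
  by case/orP: Hxy => /andP[/eqP-> /eqP->] -> ->.
have xNy : x != y by apply: contraNneq xNyq => ->; rewrite mem_head.
case: q => [|z q] in IH uyq pq xNyq *.
  exists [set e]; split=> [||v|v]; first by rewrite sub1set.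
  - by move=> h /set1P ->; rewrite ends_e ?inE ?eqxx ?orbT.
  - rewrite !inE => /orP[]/eqP->; first exact: connect0.
    by apply/connect1/adjP; exists e; rewrite ?inE.
  - by rewrite deg_set1 /= mem_seq1 andbN muln0 addn0 (deg_edge v Hxy).
have [P [PS Pends Pcon Pdeg]] := IH y uyq pq isT.
have eNP : e \notin P.
  apply/negP => /Pends /andP[se te]; case/negP: xNyq.
  by case/orP: Hxy => /andP[/eqP sx /eqP tx]; [rewrite -sx | rewrite -tx].
exists (e |: P); split=> [|h|v|v].
- by rewrite subUset sub1set eS PS.
- case/setU1P=> [->|/Pends /andP[sh th]].
    by rewrite ends_e ?inE ?eqxx ?orbT.
  by rewrite in_cons sh in_cons th !orbT.
- rewrite in_cons => /orP[/eqP->|/Pcon yv]; first exact: connect0.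
  apply: connect_trans (connect_adj_sub (subsetUr [set e] P) yv).
  by apply/connect1/adjP; exists e; rewrite ?setU11.
rewrite degU1 // deg_set1 Pdeg (deg_edge v Hxy) /=.
have yNl : (y == last z q) = false.
  by apply/negbTE; apply: contraNneq (andP uyq).1 => ->; apply: mem_last.
have [->|vNy] := eqVneq v y.
  by rewrite yNl (negbTE (andP uyq).1) mem_head eq_sym (negbTE xNy).
by rewrite [v \in y :: _]in_cons (negbTE vNy) /= add0n addn0 addnA.
Qed.

Lemma cycle_of_connect S f : f \notin S -> connect (adj S) (src f) (tgt f) ->
  exists C, [/\ f \in C, C \subset f |: S, is_cycle C &
    {in C, forall h, connect (adj S) (src f) (src h)
                     && connect (adj S) (src f) (tgt h)}].
Proof.
move=> fNS /connectP[p0 /shortenP[p pp up _] tf]{p0}.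
set x := src f in pp up tf *.
have [p_nil|pn0] := eqVneq p [::].
  rewrite {}p_nil /= in tf.
  exists [set f]; split; rewrite ?set11 ?sub1set ?setU11 //.
    apply/and3P; split; first by apply/set0Pn; exists f; rewrite set11.
      by apply/forallP => v; rewrite deg_set1 tf /=; case: (_ == v).
    by apply/forall_inP => ? /set1P->; apply/forall_inP => ? /set1P->.
  by move=> h /set1P->; rewrite tf connect0.
have [P [PS Pends Pcon Pdeg]] := upath_edges up pp pn0.
set l := last x p in tf Pdeg *.
have fNP : f \notin P by apply: contra fNS; apply: (subsetP PS).
have xNp : x \notin p := (andP up).1.
have lp : l \in p by rewrite /l; case: (p) pn0 => //= y q _; apply: mem_last.
have xNl : x != l by apply: contraNneq xNp => ->.
have ends h : h \in f |: P -> (src h \in x :: p) && (tgt h \in x :: p).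
  by case/setU1P=> [->|/Pends//]; rewrite tf mem_head in_cons lp orbT.
exists (f |: P); split; rewrite ?setU11 ?setUS //.
  apply/and3P; split; first by apply/set0Pn; exists f; rewrite setU11.
    apply/forallP => v; rewrite degU1 // deg_set1 Pdeg tf.
    have [->|vNx] := eqVneq v x.
      by rewrite (eq_sym l) (negbTE xNl) (negbTE xNp).
    have [->|vNl] := eqVneq v l; first by rewrite andbF.
    by rewrite andbT; case: (v \in p).
  have conC h : h \in f |: P -> connect (adj (f |: P)) x (src h).
    by move=> /ends /andP[/Pcon + _]; apply: connect_adj_sub; apply: subsetUr.
  apply/forall_inP => h1 /conC c1; apply/forall_inP => h2 /conC c2.
  by apply: connect_trans c2; rewrite connect_adj_sym.
move=> h /ends /andP[/Pcon + /Pcon]; rewrite /x.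
by do 2!move/(connect_adj_sub PS) ->.
Qed.

Lemma acyclic_bridge F g : acyclic F -> g \in F ->
  ~~ connect (adj (F :\ g)) (src g) (tgt g).
Proof.
move=> /forallP acF gF; apply/negP => /(cycle_of_connect (negbT (setD11 g F))).
case=> C [_ CF cycC _]; move: (acF C); rewrite setD1K // in CF.
by rewrite CF cycC.
Qed.

Section Partition.
Variables T F : {set E}.
Hypotheses (TF0 : T :&: F = set0) (TFT : T :|: F = setT) (acF : acyclic F).
Local Notation compatible := (compatible src tgt T F).
Local Notation same_part := (same_part src tgt F).

Lemma memF e : (e \in F) = (e \notin T).
Proof.
move: TF0 TFT => /setP/(_ e) + /setP/(_ e).
by rewrite !inE; case: (e \in T); case: (e \in F).
Qed.

Lemma meetT1_inF C e h : C :&: T = [set e] -> h \in C -> h != e -> h \in F.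
Proof.
move=> /setP/(_ h) CT hC; rewrite memF; apply: contra => hT.
by rewrite -in_set1 -CT inE hC.
Qed.

Lemma cycle_meetT1_sub C1 C2 e : is_cycle C1 -> is_cycle C2 ->
  C1 :&: T = [set e] -> C2 :&: T = [set e] -> C1 \subset C2.
Proof.
move=> cyc1 cyc2 C1T C2T; apply/subsetP => g gC1; apply: contraT => gNC2.
have eC2 : e \in C2 by have := set11 e; rewrite -C2T => /setIP[].
have gF : g \in F by apply: meetT1_inF C1T gC1 _; apply: contraNneq gNC2 => ->.
have C2eF : C2 :\ e \subset F :\ g.
  apply/subsetP => h /setD1P[he hC2].
  rewrite !inE (meetT1_inF C2T hC2 he) andbT.
  by apply: contraNneq gNC2 => <-.
have con_e := connect_adj_sub C2eF (connect_cycleD1 cyc2 eC2).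
case/negP: (acyclic_bridge acF gF).
apply: connect_adj_edges (connect_cycleD1 cyc1 gC1) => h /setD1P[hg hC1].
have [-> //|he] := eqVneq h e.
by apply/connect1/adj_edge; rewrite !inE hg (meetT1_inF C1T hC1 he).
Qed.

Lemma cycle_meetT1_inj C1 C2 e : is_cycle C1 -> is_cycle C2 ->
  C1 :&: T = [set e] -> C2 :&: T = [set e] -> C1 = C2.
Proof.
move=> cyc1 cyc2 C1T C2T; apply/eqP; rewrite eqEsubset.
by rewrite (cycle_meetT1_sub _ _ C1T C2T) ?(cycle_meetT1_sub _ _ C2T C1T).
Qed.

Lemma compatible_meetT1 C : compatible C ->
  exists2 e, C :&: T = [set e] & e \in [set e in T | same_part (src e) (tgt e)].
Proof.
case/and3P=> _ /forall_inP vert /cards1P[e CT]; exists e => //.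
have /setIP[eC eT] : e \in C :&: T by rewrite CT set11.
by rewrite inE eT; case/and3P: (forall_inP (vert e eC) e eC).
Qed.

Lemma compatible_of_edge e : e \in T -> same_part (src e) (tgt e) ->
  exists2 C, compatible C & C :&: T = [set e].
Proof.
move=> eT con_e; have eNF : e \notin F by rewrite memF eT.
have [C [eC CeF cycC conC]] := cycle_of_connect eNF con_e.
have CT : C :&: T = [set e].
  apply/setP => h; rewrite !inE.
  have [-> |he] := eqVneq h e; first by rewrite eC eT.
  case hC: (h \in C) => //=; apply/negbTE; rewrite -memF.
  by move: (subsetP CeF h hC); rewrite !inE (negbTE he).
exists C => //; apply/and3P; split=> //; last by rewrite CT cards1.
have part u w : connect (adj F) (src e) u -> connect (adj F) (src e) w ->
    same_part u w.
  by move=> cu; apply: connect_trans; rewrite connect_adj_sym.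
apply/forall_inP => h1 /conC/andP[s1 t1].
by apply/forall_inP => h2 /conC/andP[s2 t2]; rewrite !part.
Qed.

Lemma card_compatible :
  #|[set C | compatible C]| = #|[set e in T | same_part (src e) (tgt e)]|.
Proof.
set A := [set C | compatible C]; set B := [set e in T | _].
have inj : {in A &, injective (fun C => C :&: T)}.
  move=> C1 C2; rewrite !inE => cC1 cC2 /= C12.
  have [e C1T _] := compatible_meetT1 cC1.
  have C2T : C2 :&: T = [set e] by rewrite -C12.
  case/and3P: cC1 cC2 => cyc1 _ _ /and3P[cyc2 _ _].
  exact: cycle_meetT1_inj cyc1 cyc2 C1T C2T.
have img : [set C :&: T | C in A] = [set [set e] | e in B].
  apply/setP => X; apply/imsetP/imsetP => -[Y]; rewrite inE.
    by case/compatible_meetT1 => e YT eB ->; exists e.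
  case/andP=> eT /(compatible_of_edge eT)[C cC CT] ->.
  by exists C; rewrite ?inE.
by rewrite -(card_in_imset inj) img card_imset //; apply: set1_inj.
Qed.

End Partition.
End Graph.

Theorem lemma5p2 (V E : finType) (src tgt : E -> V) (T F : {set E}) :
  valid_partition src tgt T F ->
  #|[set C : {set E} | compatible src tgt T F C]| =
  #|[set e in T | same_part src tgt F (src e) (tgt e)]|.
Proof.
case/and4P=> /eqP TF0 /eqP TFT _ /andP[acF _].
exact: card_compatible TF0 TFT acF.
Qed.
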